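(* Let $X,Y\subseteq\{a,b\}^*$ be disjoint finite sets of words with $1\le|X|\le|Y|$. Then there is a $2^{|X|}$-state MCQFA (with complex amplitudes) that accepts every word of $X$ with probability $0$ and every word of $Y$ with nonzero probability; i.e. $X$ and $Y$ are separated by a nondeterministic MCQFA with $2^{|X|}$ states.
   Context: An $n$-state Moore–Crutchfield quantum finite automaton (MCQFA) over a finite alphabet $\Sigma$ consists of a unitary matrix $U_\sigma\in\mathbb{C}^{n\times n}$ for each $\sigma\in\Sigma$, an initial unit vector $|u_0\rangle\in\mathbb{C}^n$ and a set of accepting basis states; on input $w=w_1\cdots w_k$ the final state is $U_{w_k}\cdots U_{w_1}|u_0\rangle$ and the acceptance probability is the sum of the squared moduli of its accepting coordinates. Disjoint sets $X,Y$ are separated by a nondeterministic MCQFA if every word of one set is accepted with nonzero probability and every word of the other with probability $0$. *)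

From HB Require Import structures.
From mathcomp Require Import all_boot all_order all_algebra.
Set Implicit Arguments. Unset Strict Implicit. Unset Printing Implicit Defensive.
Import Order.TTheory GRing.Theory Num.Theory.
Local Open Scope ring_scope.

Definition adjmx (C : numClosedFieldType) (n : nat) (A : 'M[C]_n) : 'M[C]_n :=
  (map_mx (@Num.conj_op C) A)^T.

Definition unitary (C : numClosedFieldType) (n : nat) (A : 'M[C]_n) : Prop :=
  A *m adjmx A = 1%:M.

Definition sqnorm (C : numClosedFieldType) (n : nat) (v : 'cV[C]_n) : C :=
  \sum_(i < n) `|v i 0| ^+ 2.

(* An n-state MCQFA over the alphabet {a,b}, encoded as bool (a = false, b = true). *)
Record MCQFA (C : numClosedFieldType) (n : nat) := {
  trans : bool -> 'M[C]_n;
  init : 'cV[C]_n;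
  accepting : {set 'I_n}
}.

Definition MCQFA_wf (C : numClosedFieldType) (n : nat) (M : MCQFA C n) : Prop :=
  (forall s, unitary (trans M s)) /\ sqnorm (init M) = 1.

Definition final_state (C : numClosedFieldType) (n : nat) (M : MCQFA C n)
  (w : seq bool) : 'cV[C]_n :=
  foldl (fun v s => trans M s *m v) (init M) w.

Definition acc_prob (C : numClosedFieldType) (n : nat) (M : MCQFA C n)
  (w : seq bool) : C :=
  \sum_(i in accepting M) `|final_state M w i 0| ^+ 2.

(* The letters act by U_a = 5^(-1/2) [[1, 2], [-2, 1]] and U_b = 5^(-1/2) [[1, 2i], [2i, 1]],
   and 5^(|w|/2) U_w = [[p_w, q_w], [-q_w^*, p_w^*]] with p_w, q_w Gaussian integers.  For each
   x in X one qubit starts in the state proportional to (-q_x, p_x); after reading w its |0>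
   amplitude is proportional to p_x q_w - q_x p_w, which vanishes for w = x.  It vanishes only
   then: modulo 5, with i |-> 3 (so i^2 = -1 and 2i = 1), every letter step has rank one, so the
   ratio q_w / p_w in F_5 records the first letter of w; and stripping a common first letter
   divides the determinant by 5.  The automaton runs the |X| qubits in parallel and accepts on
   |0...0>, so a word is rejected with certainty exactly when it lies in X. *)

From HB Require Import structures.
From mathcomp Require Import all_boot all_order all_algebra.
From mathcomp Require Import ring.
Set Implicit Arguments. Unset Strict Implicit. Unset Printing Implicit Defensive.
Import Order.TTheory GRing.Theory Num.Theory.
Local Open Scope ring_scope.

Section WordPair.
Variable R : comNzRingType.
Implicit Types (j : R) (s : bool) (w x : seq bool).

(* [j] stands for the imaginary unit; leaving it abstract lets the same recursion be read in
   [{poly int}] (j = 'X), in [C] (j = 'i) and in ['F_5] (j = 3). *)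
Definition letter_entry j s : R := if s then 2 * j else 2.

Definition pair_step j s (pq : R * R) : R * R :=
  (pq.1 - letter_entry (- j) s * pq.2, letter_entry j s * pq.1 + pq.2).

Definition word_pair j : seq bool -> R * R := foldr (pair_step j) (1, 0).

Definition word_det j w x : R :=
  (word_pair j x).1 * (word_pair j w).2 - (word_pair j x).2 * (word_pair j w).1.

Lemma word_pair_cons j s w : word_pair j (s :: w) = pair_step j s (word_pair j w).
Proof. by []. Qed.

Lemma word_det_refl j w : word_det j w w = 0.
Proof. by rewrite /word_det mulrC subrr. Qed.

Lemma letter_entry_mulN j s : j * j = -1 -> letter_entry j s * letter_entry (- j) s = 4%:R.
Proof.
move=> jj; case: s => /=; last by rewrite -natrM.
transitivity (- 4%:R * (j * j)); first by ring.
by rewrite jj mulrN1 opprK.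
Qed.

Lemma word_det_cons j s w x :
  j * j = -1 -> word_det j (s :: w) (s :: x) = 5%:R * word_det j w x.
Proof.
move=> /(letter_entry_mulN s) gg; rewrite /word_det /= /pair_step /=.
transitivity ((1 + letter_entry j s * letter_entry (- j) s) * word_det j w x);
  first by rewrite /word_det; ring.
by rewrite gg addrC natr1.
Qed.

Lemma word_pair_norm j w : j * j = -1 ->
  (word_pair j w).1 * (word_pair (- j) w).1 + (word_pair j w).2 * (word_pair (- j) w).2
  = 5%:R ^+ size w.
Proof.
move=> jj; elim: w => [|s w IH] /=; first by rewrite mulr0 addr0 mulr1.
rewrite /pair_step /= opprK exprS -IH.
transitivity ((1 + letter_entry j s * letter_entry (- j) s) *
  ((word_pair j w).1 * (word_pair (- j) w).1 + (word_pair j w).2 * (word_pair (- j) w).2));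
  first by ring.
by rewrite letter_entry_mulN // addrC natr1.
Qed.

End WordPair.

Section RMorph.
Variables (R S : comNzRingType) (f : {rmorphism R -> S}).

Lemma rmorph_letter_entry j s : f (letter_entry j s) = letter_entry (f j) s.
Proof. by case: s; rewrite /= ?rmorphM rmorph_nat. Qed.

Lemma rmorph_word_pair j w :
  (f (word_pair j w).1, f (word_pair j w).2) = word_pair (f j) w.
Proof.
elim: w => [|s w IH]; first by rewrite /= rmorph1 rmorph0.
rewrite !word_pair_cons -IH /pair_step /=.
by rewrite rmorphB rmorphD !rmorphM !rmorph_letter_entry rmorphN.
Qed.

Lemma rmorph_word_det j w x : f (word_det j w x) = word_det (f j) w x.
Proof. by rewrite /word_det -!rmorph_word_pair /= rmorphB !rmorphM. Qed.

End RMorph.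

Lemma intr_rect_eq0 (C : numClosedFieldType) (a b : int) :
  a%:~R + 'i * b%:~R = 0 :> C -> a = 0 /\ b = 0.
Proof.
move=> h; have := Re_rect (realz C a) (realz C b); have := Im_rect (realz C a) (realz C b).
rewrite h !raddf0 => /esym/eqP; rewrite intr_eq0 => /eqP ->.
by move=> /esym/eqP; rewrite intr_eq0 => /eqP ->.
Qed.

Lemma int_poly_root_i_transfer (C : numClosedFieldType) (S : comNzRingType) (u : S)
    (P : {poly int}) :
  u ^+ 2 = -1 -> (map_poly intr P).[('i : C)] = 0 -> (map_poly intr P).[u] = 0.
Proof.
(* P(i) = 0 forces X^2 + 1 to divide P over Z. *)
pose m : {poly int} := 'X^2 + 1%:P.
have m_monic : m \is monic by rewrite monicXnaddC.
pose r := P %% m.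
have r_small : (size r <= 2)%N.
  by have := ltn_modpN0 P (monic_neq0 m_monic); rewrite size_XnaddC.
have evalE (T : comNzRingType) (v : T) : v ^+ 2 = -1 ->
    (map_poly intr P).[v] = (r`_0)%:~R + v * (r`_1)%:~R.
  move=> vv; rewrite {1}(Pdiv.IdomainMonic.divp_eq m_monic P) rmorphD rmorphM /=.
  rewrite hornerD hornerM !rmorphD rmorphXn /= map_polyX map_polyC /= !hornerE vv.
  rewrite rmorph1 addNr mulr0 add0r (horner_coef_wide _ (leq_trans (size_poly _ _) r_small)).
  by rewrite !big_ord_recl big_ord0 !coef_map /= expr0 mulr1 expr1 addr0 mulrC.
move=> uu; rewrite (evalE _ _ (sqrCi C)) => /intr_rect_eq0 [r0 r1].
by rewrite evalE // r0 r1 mulr0 addr0.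
Qed.

Definition lead_ratio (w : seq bool) : 'F_5 := if w is s :: _ then (if s then 1 else 2) else 0.

Lemma word_pair_mod5 w :
  (word_pair (3 : 'F_5) w).1 != 0 /\
  (word_pair (3 : 'F_5) w).2 = lead_ratio w * (word_pair (3 : 'F_5) w).1.
Proof.
elim: w => [|s w IH]; first by split; [apply/eqP => /(congr1 val) | rewrite mul0r].
rewrite word_pair_cons; move: (word_pair 3 w) IH => [p q] /= [p_neq0 ->].
set c := lead_ratio w; set a := 1 - letter_entry (- 3) s * c.
have [a_neq0 ratioE] : a != 0 /\ letter_entry 3 s + c = lead_ratio (s :: w) * a.
  by rewrite /a /c; case: (s); case: (w) => [|[] ?]; split; apply/eqP.
have -> : p - letter_entry (- 3) s * (c * p) = a * p by rewrite /a; ring.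
split; first by rewrite mulf_neq0.
by rewrite mulrA -ratioE; ring.
Qed.

Lemma word_det_mod5_eq0 w x : word_det (3 : 'F_5) w x = 0 -> lead_ratio w = lead_ratio x.
Proof.
have [pw_neq0 qwE] := word_pair_mod5 w; have [px_neq0 qxE] := word_pair_mod5 x.
rewrite /word_det qwE qxE.
set pw := (word_pair 3 w).1; set px := (word_pair 3 x).1.
have -> : px * (lead_ratio w * pw) - lead_ratio x * px * pw =
  (lead_ratio w - lead_ratio x) * (px * pw) by ring.
move/eqP; rewrite mulf_eq0 mulf_eq0 (negbTE pw_neq0) (negbTE px_neq0) !orbF.
by rewrite subr_eq0 => /eqP.
Qed.

Lemma sqr3_F5 : (3 : 'F_5) ^+ 2 = -1.
Proof. by apply/val_inj. Qed.

Lemma horner_int_word_det (S : comNzRingType) (u : S) w x :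
  (map_poly intr (word_det 'X w x)).[u] = word_det u w x.
Proof.
have cu : commr_rmorph (intr : int -> S) u by move=> a; exact: mulrC.
transitivity (horner_morph cu (word_det 'X w x)); first by [].
by rewrite rmorph_word_det; congr word_det; exact: horner_morphX.
Qed.

Lemma word_det_i_mod5 (C : numClosedFieldType) w x :
  word_det ('i : C) w x = 0 -> word_det (3 : 'F_5) w x = 0.
Proof.
rewrite -(horner_int_word_det ('i : C)) -(horner_int_word_det (3 : 'F_5)).
exact: int_poly_root_i_transfer sqr3_F5.
Qed.

Lemma lead_ratio_inj w x : lead_ratio w = lead_ratio x -> ohead w = ohead x.
Proof. by case: w x => [|[] w] [|[] x] // /(congr1 val). Qed.

Lemma word_det_i_eq0 (C : numClosedFieldType) w x : word_det ('i : C) w x = 0 -> w = x.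
Proof.
elim: w x => [|s w IH] [|t x] // det0;
  have := lead_ratio_inj (word_det_mod5_eq0 (word_det_i_mod5 det0)) => //= -[ts]; subst t.
move: det0; rewrite word_det_cons ?mulCii // => /eqP.
by rewrite mulf_eq0 pnatr_eq0 /= => /eqP /IH ->.
Qed.

Section SU2.
Variable C : numClosedFieldType.
Implicit Types a b c d : C.

Definition su a b : 'M[C]_2 :=
  \matrix_(i, j) if i == 0 :> nat then (if j == 0 :> nat then a else b)
                 else (if j == 0 :> nat then - b^* else a^*).

Lemma mul_su a b c d : su a b *m su c d = su (a * c - b * d^*) (a * d + b * c^*).
Proof.
apply/matrixP => i j; rewrite !mxE !big_ord_recl big_ord0 !mxE /=.
case: i => [[|[|//]] ?]; case: j => [[|[|//]] ?] /=;
  rewrite ?rmorphB ?rmorphD ?rmorphM ?rmorphN /= ?conjCK; ring.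
Qed.

Lemma adjmx_su a b : adjmx (su a b) = su a^* (- b).
Proof.
apply/matrixP => i j; rewrite /adjmx !mxE.
by case: i => [[|[|//]] ?]; case: j => [[|[|//]] ?]; rewrite /= ?rmorphN /= ?conjCK ?opprK.
Qed.

Lemma su_unitary a b : a * a^* + b * b^* = 1 -> unitary (su a b).
Proof.
move=> ab1; rewrite /unitary adjmx_su mul_su conjCK rmorphN /= !mulrN opprK ab1 mulrC addNr.
apply/matrixP => i j; rewrite !mxE.
by case: i => [[|[|//]] ?]; case: j => [[|[|//]] ?]; rewrite /= ?rmorph0 ?rmorph1 ?oppr0.
Qed.

End SU2.

Section Letters.
Variable C : numClosedFieldType.
Implicit Types (s : bool) (w x : seq bool).

Lemma su10 : su 1 0 = 1%:M :> 'M[C]_2.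
Proof.
apply/matrixP => i j; rewrite !mxE.
by case: i => [[|[|//]] ?]; case: j => [[|[|//]] ?]; rewrite /= ?rmorph0 ?rmorph1 ?oppr0.
Qed.

Definition isqrt5 : C := (sqrtC 5%:R)^-1.

Lemma isqrt5_gt0 : 0 < isqrt5.
Proof. by rewrite invr_gt0 sqrtC_gt0 ltr0n. Qed.

Lemma conj_isqrt5 : isqrt5^* = isqrt5.
Proof. exact/conj_Creal/gtr0_real/isqrt5_gt0. Qed.

Lemma isqrt5_sqr : isqrt5 ^+ 2 * 5%:R = 1.
Proof. by rewrite exprVn sqrtCK mulVf ?pnatr_eq0. Qed.

Lemma conj_letter_entry s : (letter_entry ('i : C) s)^* = letter_entry (- 'i) s.
Proof. by rewrite -conjCi; exact: rmorph_letter_entry. Qed.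

Lemma conj_word_pair w :
  ((word_pair ('i : C) w).1^*, (word_pair ('i : C) w).2^*) = word_pair (- 'i) w.
Proof. by rewrite -conjCi; exact: rmorph_word_pair. Qed.

Lemma word_pair_i_norm w :
  `|(word_pair ('i : C) w).1| ^+ 2 + `|(word_pair ('i : C) w).2| ^+ 2 = 5%:R ^+ size w.
Proof. by rewrite !normCK -(word_pair_norm w (mulCii C)) -conj_word_pair. Qed.

Definition letter_mx s : 'M[C]_2 := su isqrt5 (isqrt5 * letter_entry 'i s).

Lemma letter_mx_unitary s : unitary (letter_mx s).
Proof.
apply: su_unitary; rewrite rmorphM /= conj_isqrt5 conj_letter_entry.
transitivity (isqrt5 ^+ 2 * (1 + letter_entry 'i s * letter_entry (- 'i) s)); first by ring.
by rewrite letter_entry_mulN ?mulCii // addrC natr1 isqrt5_sqr.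
Qed.

Lemma run_letter_mx w (v : 'cV[C]_2) :
  foldl (fun v s => letter_mx s *m v) v w =
  su (isqrt5 ^+ size w * (word_pair 'i w).1) (isqrt5 ^+ size w * (word_pair 'i w).2) *m v.
Proof.
elim: w v => [|s w IH] v; first by rewrite /= mul1r mulr0 su10 mul1mx.
rewrite [LHS]/= IH mulmxA mul_su rmorphM /= conj_isqrt5 conj_letter_entry exprS.
by congr (su _ _ *m v); ring.
Qed.

Definition witness_vec x : 'cV[C]_2 :=
  \col_i (isqrt5 ^+ size x *
          (if i == 0 :> nat then - (word_pair 'i x).2 else (word_pair 'i x).1)).

Lemma sqnorm_witness_vec x : sqnorm (witness_vec x) = 1.
Proof.
rewrite /sqnorm !big_ord_recl big_ord0 !mxE /= addr0 !normrM normrN normrX.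
rewrite gtr0_norm ?isqrt5_gt0 // !exprMn -mulrDr addrC word_pair_i_norm.
by rewrite -exprM mulnC exprM -exprMn isqrt5_sqr expr1n.
Qed.

Lemma run_witness_vec w x :
  (foldl (fun v s => letter_mx s *m v) (witness_vec x) w) ord0 ord0 =
  isqrt5 ^+ (size w + size x) * word_det 'i w x.
Proof.
by rewrite run_letter_mx !mxE !big_ord_recl big_ord0 !mxE /= /word_det exprD; ring.
Qed.

End Letters.

Section Tensor.
Variables (R : comNzRingType) (m k : nat).
Implicit Types (A B : 'I_k -> 'M[R]_m) (v : 'I_k -> 'cV[R]_m).

Definition tensor_index := {ffun 'I_k -> 'I_m}.

Lemma card_tensor_index : #|{: tensor_index}| = (m ^ k)%N.
Proof. by rewrite card_ffun !card_ord. Qed.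

Definition digits (i : 'I_(m ^ k)) : tensor_index :=
  enum_val (cast_ord (esym card_tensor_index) i).
Definition undigits (f : tensor_index) : 'I_(m ^ k) :=
  cast_ord card_tensor_index (enum_rank f).

Lemma digitsK : cancel digits undigits.
Proof. by move=> i; rewrite /digits /undigits enum_valK cast_ordKV. Qed.

Lemma undigitsK : cancel undigits digits.
Proof. by move=> f; rewrite /digits /undigits cast_ordK enum_rankK. Qed.

Lemma sum_prod_digits (F : 'I_k -> 'I_m -> R) :
  \sum_(t < m ^ k) \prod_l F l (digits t l) = \prod_l \sum_(b < m) F l b.
Proof.
rewrite bigA_distr_bigA (reindex undigits) /=; last first.
  by exists digits => f _; [exact: undigitsK | exact: digitsK].
by apply: eq_bigr => f _; rewrite undigitsK.
Qed.

Definition tensor_mx (A : 'I_k -> 'M[R]_m) : 'M[R]_(m ^ k) :=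
  \matrix_(i, j) \prod_l A l (digits i l) (digits j l).

Definition tensor_col (v : 'I_k -> 'cV[R]_m) : 'cV[R]_(m ^ k) :=
  \col_i \prod_l v l (digits i l) 0.

Lemma tensor_colE v f : tensor_col v (undigits f) 0 = \prod_l v l (f l) 0.
Proof. by rewrite mxE undigitsK. Qed.

Lemma mul_tensor_mx A B : tensor_mx A *m tensor_mx B = tensor_mx (fun l => A l *m B l).
Proof.
apply/matrixP => i j; rewrite !mxE.
rewrite (eq_bigr (fun t =>
  \prod_l (A l (digits i l) (digits t l) * B l (digits t l) (digits j l)))).
  rewrite (sum_prod_digits (fun l b => A l (digits i l) b * B l b (digits j l))).
  by apply: eq_bigr => l _; rewrite mxE.
by move=> t _; rewrite !mxE big_split.
Qed.

Lemma mul_tensor_col A v : tensor_mx A *m tensor_col v = tensor_col (fun l => A l *m v l).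
Proof.
apply/matrixP => i j; rewrite !mxE.
rewrite (eq_bigr (fun t => \prod_l (A l (digits i l) (digits t l) * v l (digits t l) 0))).
  rewrite (sum_prod_digits (fun l b => A l (digits i l) b * v l b 0)).
  by apply: eq_bigr => l _; rewrite mxE.
by move=> t _; rewrite !mxE big_split.
Qed.

Lemma eq_tensor_mx A B : (forall l, A l = B l) -> tensor_mx A = tensor_mx B.
Proof.
by move=> eqAB; apply/matrixP => i j; rewrite !mxE; apply: eq_bigr => l _; rewrite eqAB.
Qed.

Lemma tensor_mx1 : tensor_mx (fun _ => 1%:M) = 1%:M.
Proof.
apply/matrixP => i j; rewrite !mxE.
have [<-|neq_ij] := eqVneq i j; first by rewrite big1 // => l _; rewrite mxE eqxx.
have [l neq_l] : exists l, digits i l != digits j l.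
  apply/existsP; apply: contraR neq_ij => /existsPn eq_ij.
  by rewrite -(digitsK i) -(digitsK j); apply/eqP/congr1/ffunP => l; apply/eqP/negPn.
by rewrite (bigD1 l) //= mxE (negbTE neq_l) mul0r.
Qed.

Lemma foldl_tensor_col (T : Type) (U : T -> 'M[R]_m) v (w : seq T) :
  foldl (fun u s => tensor_mx (fun=> U s) *m u) (tensor_col v) w =
  tensor_col (fun l => foldl (fun u s => U s *m u) (v l) w).
Proof. by elim: w v => [|s w IH] v //=; rewrite mul_tensor_col IH. Qed.

End Tensor.

Section TensorUnitary.
Variables (C : numClosedFieldType) (m k : nat).

Lemma adjmx_tensor_mx (A : 'I_k -> 'M[C]_m) :
  adjmx (tensor_mx A) = tensor_mx (fun l => adjmx (A l)).
Proof.
apply/matrixP => i j; rewrite /adjmx !mxE rmorph_prod.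
by apply: eq_bigr => l _; rewrite !mxE.
Qed.

Lemma tensor_mx_unitary (A : 'I_k -> 'M[C]_m) :
  (forall l, unitary (A l)) -> unitary (tensor_mx A).
Proof.
move=> A_unitary; rewrite /unitary adjmx_tensor_mx mul_tensor_mx -tensor_mx1.
exact: eq_tensor_mx.
Qed.

Lemma sqnorm_tensor_col (v : 'I_k -> 'cV[C]_m) :
  sqnorm (tensor_col v) = \prod_l sqnorm (v l).
Proof.
rewrite /sqnorm -sum_prod_digits; apply: eq_bigr => t _.
by rewrite mxE normr_prod -prodrXl.
Qed.

End TensorUnitary.

Theorem mainTheorem15 (C : numClosedFieldType) (X Y : seq (seq bool)) :
  uniq X -> uniq Y ->
  (forall w, w \in X -> w \notin Y) ->
  (1 <= size X <= size Y)%N ->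
  exists M : MCQFA C (2 ^ size X),
    MCQFA_wf M /\
    (forall w, w \in X -> acc_prob M w = 0) /\
    (forall w, w \in Y -> acc_prob M w != 0).
Proof.
move=> _ _ disjXY _.
pose M := {| trans s := tensor_mx (fun _ : 'I_(size X) => letter_mx C s);
             init := tensor_col (fun l => witness_vec C (nth [::] X l));
             accepting := [set undigits [ffun _ => ord0]] |}.
have acc_probE w : acc_prob M w =
    `|\prod_(l < size X) (isqrt5 C ^+ (size w + size (nth [::] X l)) *
                          word_det 'i w (nth [::] X l))| ^+ 2.
  rewrite /acc_prob /final_state big_set1 foldl_tensor_col tensor_colE.
  by congr (`|_| ^+ 2); apply: eq_bigr => l _; rewrite ffunE run_witness_vec.
exists M; split; [split | split] => [s | | w wX | w wY].
- by apply: tensor_mx_unitary => l; exact: letter_mx_unitary.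
- by rewrite sqnorm_tensor_col big1 // => l _; exact: sqnorm_witness_vec.
- rewrite acc_probE (bigD1 (Ordinal (etrans (index_mem w X) wX))) //=.
  by rewrite nth_index // word_det_refl mulr0 mul0r normr0 expr0n.
- rewrite acc_probE sqrf_eq0 normr_eq0 prodf_seq_neq0; apply/allP => l _.
  rewrite mulf_neq0 ?expf_neq0 ?(gt_eqF (isqrt5_gt0 C)) //; apply/eqP => /word_det_i_eq0 wE.
  by move: (disjXY _ (mem_nth [::] (ltn_ord l))); rewrite -wE wY.
Qed.
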